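(* Let $\mathcal{G}$ be the Galilei group of transformations of $\mathbb{R}^4=\mathbb{R}^3\times\mathbb{R}$ of the form $x\mapsto \begin{pmatrix} S & w\\ 0^T & 1\end{pmatrix}x+b$ ($S\in SO(3)$, $w\in\mathbb{R}^3$, $b\in\mathbb{R}^4$), and let $C\mathcal{G}$ be the conformal Galilei group of transformations $x\mapsto \lambda\begin{pmatrix} S & w\\ 0^T & 1\end{pmatrix}x+b$ with additionally $\lambda>0$. Standard Newtonian simultaneity, i.e. the relation $(\mathbf{x},x^4)\sim(\mathbf{y},y^4)\iff x^4=y^4$, is the only nontrivial $\mathcal{G}$-invariant equivalence relation on $\mathbb{R}^4$ such that either (i) its equivalence classes are connected subspaces of $\mathbb{R}^4$, or (ii) it is $C\mathcal{G}$-invariant.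
   Context: An equivalence relation $\sim$ is invariant under a group of transformations if $x\sim y$ implies $g(x)\sim g(y)$ for all $x,y$ and all $g$ in the group. It is trivial if it is the total relation or the identity relation (diagonal). *)

From HB Require Import structures.
From mathcomp Require Import all_boot all_order all_algebra.
From mathcomp Require Import all_classical all_reals all_analysis.
Set Implicit Arguments. Unset Strict Implicit. Unset Printing Implicit Defensive.
Import Order.TTheory GRing.Theory Num.Theory.
Import numFieldNormedType.Exports.
Local Open Scope ring_scope.
Local Open Scope classical_set_scope.

(* Points of R^4 = R^3 x R are column vectors 'cV[R]_4; the last coordinate
   (index ord_max = 3) is the time coordinate x^4. *)

Definition SO3 (R : realType) (S : 'M[R]_3) : Prop :=
  S *m S^T = 1%:M /\ \det S = 1.

Definition galmat (R : realType) (S : 'M[R]_3) (w : 'cV[R]_3) : 'M[R]_4 :=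
  block_mx S w 0 1%:M.

Definition galilei (R : realType) (f : 'cV[R]_4 -> 'cV[R]_4) : Prop :=
  exists (S : 'M[R]_3) (w : 'cV[R]_3) (b : 'cV[R]_4),
    SO3 S /\ forall x, f x = galmat S w *m x + b.

Definition conf_galilei (R : realType) (f : 'cV[R]_4 -> 'cV[R]_4) : Prop :=
  exists (l : R) (S : 'M[R]_3) (w : 'cV[R]_3) (b : 'cV[R]_4),
    0 < l /\ SO3 S /\ forall x, f x = l *: (galmat S w *m x) + b.

Definition is_equivalence (T : Type) (r : T -> T -> Prop) : Prop :=
  (forall x, r x x) /\ (forall x y, r x y -> r y x) /\
  (forall x y z, r x y -> r y z -> r x z).

Definition invariant_under (T : Type) (grp : (T -> T) -> Prop)
  (r : T -> T -> Prop) : Prop :=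
  forall g, grp g -> forall x y, r x y -> r (g x) (g y).

Definition trivial_rel (T : Type) (r : T -> T -> Prop) : Prop :=
  (forall x y, r x y) \/ (forall x y, r x y <-> x = y).

Definition connected_classes (R : realType) (r : 'cV[R]_4 -> 'cV[R]_4 -> Prop)
  : Prop := forall x, connected [set y | r x y].

Definition newton_simul (R : realType) (x y : 'cV[R]_4) : Prop :=
  x ord_max 0 = y ord_max 0.

From HB Require Import structures.
From mathcomp Require Import all_boot all_order all_algebra.
From mathcomp Require Import all_classical all_reals all_analysis.
From mathcomp Require Import ring lra.
Set Implicit Arguments. Unset Strict Implicit. Unset Printing Implicit Defensive.
Import Order.TTheory GRing.Theory Num.Theory.
Import numFieldNormedType.Exports.
Local Open Scope ring_scope.
Local Open Scope classical_set_scope.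

(* A Galilei-invariant equivalence relation r is determined by its kernel
   K = {v | r 0 v}, an additive subgroup of R^4 stable under the linear parts
   of Galilei maps.  If K is nonzero it contains every spatial vector: for a
   vector with nonzero time component, its differences with boosted copies
   are all spatial vectors; a nonzero spatial one is turned by rotations into
   a nonzero multiple of e1,
   and sums of two rotated copies of s e1 give every c s e1 with |c| <= 2,
   hence all of R e1, hence all of R^3.  So K = R^3 x T for a subgroup T of R.
   If T contained some t0 <> 0, then connectedness of the class of 0 (whose
   time projection is an interval) or stability of K under dilations would
   force T = R, making r total.  Hence T = 0, i.e. r is simultaneity. *)

Lemma addr_closed_ball_total (R : archiRealFieldType) (P : R -> Prop) (e : R) :
  0 < e -> (forall a b, P a -> P b -> P (a + b)) ->
  (forall u, `|u| <= e -> P u) -> forall u, P u.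
Proof.
move=> e_gt0 PD Pball u.
pose n := (Num.bound (`|u| / e)).+1.
have n_gt0 : 0 < n%:R :> R by rewrite ltr0n.
have PMn x k : P x -> P (x *+ k.+1).
  by move=> Px; elim: k => [|k IHk]; rewrite ?mulr1n // mulrS; apply: PD.
rewrite -[u](@divfK _ n%:R) ?pnatr_eq0 // mulr_natr; apply: PMn; apply: Pball.
rewrite normrM normfV normr_nat ler_pdivrMr // mulrC -ler_pdivrMr //.
apply/ltW/(lt_le_trans (archi_boundP _)); first by rewrite divr_ge0 // ltW.
by rewrite ler_nat.
Qed.

Lemma star_shaped_connected (R : realType) (V : normedModType R)
    (A : set V) (x : V) :
  A x -> (forall y s, A y -> 0 <= s <= 1 -> A (x + s *: (y - x))) ->
  connected A.
Proof.
move=> Ax Astar.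
have -> : A = \bigcup_(y in A) ((fun s : R => x + s *: (y - x)) @` `[0, 1]).
  apply/seteqP; split=> [y Ay | _ [y Ay [s s01 <-]]].
    exists y => //; exists 1; first by rewrite /= in_itv /= ler01 lexx.
    by rewrite scale1r addrC subrK.
  by apply: Astar => //; move: s01; rewrite /= in_itv.
apply: bigcup_connected => [|y _].
  exists x => y _; exists 0; first by rewrite /= in_itv /= lexx ler01.
  by rewrite scale0r addr0.
apply: connected_continuous_connected; first exact: segment_connected.
apply: continuous_subspaceT => s.
exact: (continuousD (@cst_continuous _ _ x s) (@scalel_continuous _ _ (y - x) s)).
Qed.

Section ThreeByThree.
Variable R : comPzRingType.

Definition vec3 (a b c : R) : 'cV[R]_3 := \col_(i < 3) nth 0 [:: a; b; c] i.

Definition mat3 (a b c d e f g h k : R) : 'M[R]_3 :=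
  \matrix_(i < 3, j < 3)
    nth 0 (nth [::] [:: [:: a; b; c]; [:: d; e; f]; [:: g; h; k]] i) j.

Lemma vec3E (z : 'cV[R]_3) : z = vec3 (z 0 0) (z 1 0) (z 2%:R 0).
Proof.
apply/matrixP => i j; rewrite !mxE (ord1 j).
by case: i => [[|[|[|?]]] ?] //=; congr (z _ _); apply: val_inj.
Qed.

Lemma vec3D a b c a' b' c' :
  vec3 a b c + vec3 a' b' c' = vec3 (a + a') (b + b') (c + c').
Proof.
by apply/matrixP => i j; rewrite !mxE; case: i => [[|[|[|?]]] ?] //=; rewrite addr0.
Qed.

Lemma vec30 : vec3 0 0 0 = 0.
Proof. by apply/matrixP => i j; rewrite !mxE; case: i => [[|[|[|?]]] ?]. Qed.

Lemma mul_mat3_vec3 a b c d e f g h k x y z :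
  mat3 a b c d e f g h k *m vec3 x y z =
  vec3 (a * x + b * y + c * z) (d * x + e * y + f * z) (g * x + h * y + k * z).
Proof.
apply/matrixP => i j; rewrite !mxE !big_ord_recr big_ord0 /= !mxE /=.
by case: i => [[|[|[|?]]] ?] //=; rewrite add0r.
Qed.

Lemma tr_mat3 a b c d e f g h k :
  (mat3 a b c d e f g h k)^T = mat3 a d g b e h c f k.
Proof.
apply/matrixP => i j; rewrite !mxE.
by case: i => [[|[|[|?]]] ?] //=; case: j => [[|[|[|?]]] ?].
Qed.

Lemma mul_mat3 a b c d e f g h k a' b' c' d' e' f' g' h' k' :
  mat3 a b c d e f g h k *m mat3 a' b' c' d' e' f' g' h' k' =
  mat3 (a*a' + b*d' + c*g') (a*b' + b*e' + c*h') (a*c' + b*f' + c*k')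
       (d*a' + e*d' + f*g') (d*b' + e*e' + f*h') (d*c' + e*f' + f*k')
       (g*a' + h*d' + k*g') (g*b' + h*e' + k*h') (g*c' + h*f' + k*k').
Proof.
apply/matrixP => i j; rewrite !mxE !big_ord_recr big_ord0 /= !mxE /=.
by case: i => [[|[|[|?]]] ?] //=; case: j => [[|[|[|?]]] ?] //=; rewrite add0r.
Qed.

Lemma mat3_1 : 1%:M = mat3 1 0 0 0 1 0 0 0 1.
Proof.
apply/matrixP => i j; rewrite !mxE.
by case: i => [[|[|[|?]]] ?] //=; case: j => [[|[|[|?]]] ?].
Qed.

Lemma det_mat3 a b c d e f g h k :
  \det (mat3 a b c d e f g h k) =
  a * (e * k - f * h) - b * (d * k - f * g) + c * (d * h - e * g).
Proof.
rewrite (expand_det_row _ 0) !big_ord_recr big_ord0 /=.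
rewrite /cofactor !(expand_det_row _ 0) !big_ord_recr big_ord0 /= /cofactor.
by rewrite !det_mx11 !mxE /= !big_ord0 !add0n; ring.
Qed.

End ThreeByThree.

Section Rotations.
Variable R : realType.

Lemma SO3_1 : SO3 (1%:M : 'M[R]_3).
Proof. by split; [rewrite trmx1 mulmx1 | rewrite det1]. Qed.

Lemma SO3_half_turn_x : SO3 (mat3 1 0 0 0 (-1) 0 0 0 (-1) : 'M[R]_3).
Proof.
by split; [rewrite tr_mat3 mul_mat3 mat3_1; congr mat3 | rewrite det_mat3]; ring.
Qed.

Lemma SO3_cycle : SO3 (mat3 0 0 1 1 0 0 0 1 0 : 'M[R]_3).
Proof.
by split; [rewrite tr_mat3 mul_mat3 mat3_1; congr mat3 | rewrite det_mat3]; ring.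
Qed.

Lemma SO3_rot_z (c d : R) :
  c * c + d * d = 1 -> SO3 (mat3 c (- d) 0 d c 0 0 0 1).
Proof.
move=> cd1; split; [rewrite tr_mat3 mul_mat3 mat3_1; congr mat3 | rewrite det_mat3];
  by [ring | transitivity (c * c + d * d); [ring | exact: cd1]].
Qed.

End Rotations.

Section Events.
Variable R : realType.
Implicit Types (z : 'cV[R]_3) (t : R) (x : 'cV[R]_4).

Definition event z t : 'cV[R]_4 := col_mx z t%:M.
Definition space x : 'cV[R]_3 := @usubmx R 3 1 1 x.
Definition time x : R := x ord_max 0.

Lemma time_event z t : time (event z t) = t.
Proof.
rewrite /time /event.
transitivity ((col_mx z t%:M : 'cV[R]_(3 + 1)) (rshift 3 (0 : 'I_1)) 0).
  by congr (_ _ _); exact: val_inj.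
by rewrite col_mxEd mxE.
Qed.

Lemma space_event z t : space (event z t) = z.
Proof. exact: col_mxKu. Qed.

Lemma eventE x : x = event (space x) (time x).
Proof.
apply/matrixP => i j; rewrite /event /space /time mxE; case: splitP => k ik.
  by rewrite mxE; congr (x _ _); exact: val_inj.
by rewrite mxE (ord1 j) (ord1 k) mulr1n; congr (x _ _); apply: val_inj; rewrite /= ik (ord1 k).
Qed.

Lemma eventD z t z' t' : event z t + event z' t' = event (z + z') (t + t').
Proof. by rewrite /event raddfD; exact: (add_col_mx z t%:M z' t'%:M). Qed.

Lemma eventN z t : - event z t = event (- z) (- t).
Proof. by rewrite /event raddfN; exact: (opp_col_mx z t%:M). Qed.

Lemma eventZ l z t : l *: event z t = event (l *: z) (l * t).
Proof. by rewrite /event -scale_scalar_mx; exact: (scale_col_mx l z t%:M). Qed.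

Lemma event0 : event 0 0 = 0.
Proof. by rewrite /event raddf0; exact: (@col_mx0 R 3 1 1). Qed.

Lemma event_eq0 z t : (event z t == 0) = (z == 0) && (t == 0).
Proof.
apply/eqP/andP => [e0 | [/eqP-> /eqP->]]; last exact: event0.
have := congr1 space e0; have := congr1 time e0.
by rewrite space_event time_event /space /time mxE linear0 => -> ->.
Qed.

Lemma galmat_event S w z t : galmat S w *m event z t = event (S *m z + t *: w) t.
Proof.
rewrite /galmat /event.
transitivity (col_mx (S *m z + w *m t%:M) (0 *m z + 1%:M *m t%:M) : 'cV[R]_(3 + 1)).
  exact: (mul_block_col S w 0 1%:M z t%:M).
by rewrite mul0mx add0r mul1mx mul_mx_scalar.
Qed.

Lemma galmat1 : galmat (1%:M : 'M[R]_3) 0 = 1%:M.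
Proof. exact: (esym (@scalar_mx_block R 3 1 1)). Qed.

Lemma time_conf_galilei l S w b x :
  time (l *: (galmat S w *m x) + b) = l * time x + time b.
Proof. by rewrite [x]eventE [b]eventE galmat_event eventZ eventD !time_event. Qed.

Lemma galilei_conf_galilei (f : 'cV[R]_4 -> 'cV[R]_4) :
  galilei f -> conf_galilei f.
Proof.
move=> [S [w [b [SO3S fE]]]]; exists 1, S, w, b.
by split; [exact: ltr01 | split=> // x; rewrite scale1r].
Qed.

Lemma galilei_translation b : galilei (fun x => x + b).
Proof. by exists 1%:M, 0, b; split=> [|x]; rewrite ?galmat1 ?mul1mx //; exact: SO3_1. Qed.

Lemma galilei_linear S w : SO3 S -> galilei (fun x => galmat S w *m x).
Proof. by move=> SO3S; exists S, w, 0; split=> // x; rewrite addr0. Qed.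

Lemma conf_galilei_scale l : 0 < l -> conf_galilei (fun x => l *: x).
Proof.
move=> l_gt0; exists l, 1%:M, 0, 0; split=> //; split=> [|x]; first exact: SO3_1.
by rewrite galmat1 mul1mx addr0.
Qed.

End Events.

Section Simultaneity.
Variable R : realType.

Lemma newton_simul_equivalence : is_equivalence (@newton_simul R).
Proof. by rewrite /newton_simul; split=> //; split=> [x y ->|x y z -> ->]. Qed.

Lemma newton_simul_conf_galilei :
  invariant_under (@conf_galilei R) (@newton_simul R).
Proof.
move=> g [l [S [w [b [_ [_ gE]]]]]] x y xy.
have := time_conf_galilei l S w b; rewrite /newton_simul /time in xy * => tE.
by rewrite !gE !tE xy.
Qed.

Lemma newton_simul_galilei : invariant_under (@galilei R) (@newton_simul R).
Proof. by move=> g /galilei_conf_galilei; exact: newton_simul_conf_galilei. Qed.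

Lemma newton_simul_nontrivial : ~ trivial_rel (@newton_simul R).
Proof.
have e0 (z : 'cV[R]_3) t : newton_simul 0 (event z t) <-> t = 0.
  by rewrite /newton_simul -[event z t _ _]/(time _) time_event mxE; split=> ->.
case=> [total | identity].
  by have /e0/eqP := total 0 (event 0 1); rewrite oner_eq0.
have /identity/esym/eqP := proj2 (e0 (const_mx 1) 0) erefl.
by rewrite event_eq0 eqxx andbT => /eqP/matrixP/(_ 0 0); rewrite !mxE => /eqP; rewrite oner_eq0.
Qed.

Lemma newton_simul_connected : connected_classes (@newton_simul R).
Proof.
move=> x; apply: (star_shaped_connected (x := x)) => [|y s] //=.
by rewrite /newton_simul !mxE => <-; rewrite subrr mulr0 addr0.
Qed.

End Simultaneity.

Section InvariantRelation.
Variable R : realType.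
Variable r : 'cV[R]_4 -> 'cV[R]_4 -> Prop.
Hypothesis r_equiv : is_equivalence r.
Hypothesis r_galilei : invariant_under (@galilei R) r.

Let r_refl := proj1 r_equiv.
Let r_sym := proj1 (proj2 r_equiv).
Let r_trans := proj2 (proj2 r_equiv).

Lemma r_kernelE x y : r x y <-> r 0 (y - x).
Proof.
split=> xy; first by have := r_galilei (galilei_translation (- x)) xy; rewrite subrr.
by have := r_galilei (galilei_translation x) xy; rewrite add0r subrK.
Qed.

Lemma r_kernelN v : r 0 v -> r 0 (- v).
Proof.
by move=> v0; have := r_galilei (galilei_translation (- v)) v0; rewrite add0r subrr => /r_sym.
Qed.

Lemma r_kernelD u v : r 0 u -> r 0 v -> r 0 (u + v).
Proof.
move=> u0 v0; apply: r_trans u0 _.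
by have := r_galilei (galilei_translation u) v0; rewrite add0r addrC.
Qed.

Lemma r_kernel_galmat S w v : SO3 S -> r 0 v -> r 0 (galmat S w *m v).
Proof. by move=> SO3S v0; have := r_galilei (galilei_linear w SO3S) v0; rewrite mulmx0. Qed.

Lemma kernel_nonzero : ~ trivial_rel r -> exists2 v, v != 0 & r 0 v.
Proof.
move=> r_nontriv; apply: contrapT => no_v; apply: r_nontriv.
right=> x y; split=> [/r_kernelE yx | ->]; last exact: r_refl.
apply/eqP; rewrite eq_sym -subr_eq0; apply/negPn/negP => yx_neq0.
by apply: no_v; exists (y - x).
Qed.

Let spatial z := r 0 (event z 0).

Lemma spatialD z z' : spatial z -> spatial z' -> spatial (z + z').
Proof. by move=> z0 z'0; have := r_kernelD z0 z'0; rewrite eventD addr0. Qed.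

Lemma spatial_rot S z : SO3 S -> spatial z -> spatial (S *m z).
Proof.
by move=> SO3S z0; have := r_kernel_galmat 0 SO3S z0; rewrite galmat_event scale0r addr0.
Qed.

Lemma spatial_cycle a b c : spatial (vec3 a b c) -> spatial (vec3 c a b).
Proof.
move=> abc; have := spatial_rot (SO3_cycle R) abc; rewrite mul_mat3_vec3.
by congr (spatial (vec3 _ _ _)); ring.
Qed.

Lemma spatial_axis a b c : spatial (vec3 a b c) -> spatial (vec3 (a + a) 0 0).
Proof.
move=> abc; have := spatialD abc (spatial_rot (SO3_half_turn_x R) abc).
by rewrite mul_mat3_vec3 vec3D; congr (spatial (vec3 _ _ _)); ring.
Qed.

Lemma spatial_axis_scale s c :
  spatial (vec3 s 0 0) -> `|c| <= 1 -> spatial (vec3 (c * s + c * s) 0 0).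
Proof.
move=> s0 c_le1; pose d := Num.sqrt (1 - c * c).
have cd1 : c * c + d * d = 1.
  have : 0 <= 1 - c * c by move: c_le1; rewrite ler_norml => /andP[]; nra.
  by move=> /sqr_sqrtr dd; rewrite /d -[Num.sqrt _ * _]expr2 dd; ring.
have cNd1 : c * c + (- d) * (- d) = 1 by rewrite mulrNN.
have := spatialD (spatial_rot (SO3_rot_z cd1) s0) (spatial_rot (SO3_rot_z cNd1) s0).
by rewrite !mul_mat3_vec3 vec3D; congr (spatial (vec3 _ _ _)); ring.
Qed.

Lemma spatial_axis_total s :
  s != 0 -> spatial (vec3 s 0 0) -> forall u, spatial (vec3 u 0 0).
Proof.
move=> s_neq0 s0; have s2_gt0 : 0 < `|s + s| by rewrite normr_gt0 -mulr2n mulrn_eq0.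
apply: (addr_closed_ball_total s2_gt0) => [a b a0 b0 | u u_le].
  by have := spatialD a0 b0; rewrite vec3D !addr0.
rewrite -[u](@divfK _ (s + s)) -?normr_gt0 // mulrDr.
by apply: spatial_axis_scale; rewrite // normrM normfV ler_pdivrMr // mul1r.
Qed.

Lemma spatial_nonzero_axis z :
  z != 0 -> spatial z -> exists2 s, s != 0 & spatial (vec3 s 0 0).
Proof.
rewrite [z]vec3E; set a := z 0 0; set b := z 1 0; set c := z 2%:R 0.
move=> z_neq0 z0.
have [a0|a_neq0] := eqVneq a 0; last by exists (a + a); [by rewrite -mulr2n mulrn_eq0 | exact: spatial_axis z0].
have [c0|c_neq0] := eqVneq c 0; last first.
  by exists (c + c); [rewrite -mulr2n mulrn_eq0 | exact: spatial_axis (spatial_cycle z0)].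
have [b0|b_neq0] := eqVneq b 0; last first.
  by exists (b + b); [rewrite -mulr2n mulrn_eq0 | exact: spatial_axis (spatial_cycle (spatial_cycle z0))].
by move: z_neq0; rewrite a0 b0 c0 vec30 eqxx.
Qed.

Lemma spatial_total_of_axis : (forall u, spatial (vec3 u 0 0)) -> forall z, spatial z.
Proof.
move=> axis z; rewrite [z]vec3E.
have -> : vec3 (z 0 0) (z 1 0) (z 2%:R 0) =
    vec3 (z 0 0) 0 0 + vec3 0 (z 1 0) 0 + vec3 0 0 (z 2%:R 0).
  by rewrite !vec3D !addr0 !add0r.
apply: spatialD; first apply: spatialD.
- exact: axis.
- exact: spatial_cycle (axis _).
- exact: spatial_cycle (spatial_cycle (axis _)).
Qed.

(* A boost with velocity z / t maps an event with time t onto a spatial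
   displacement z of itself. *)
Lemma spatial_of_timelike v : time v != 0 -> r 0 v -> forall z, spatial z.
Proof.
move=> t_neq0 v0 z; rewrite [v]eventE in v0.
have := r_kernel_galmat ((time v)^-1 *: z) (SO3_1 R) v0.
rewrite galmat_event mul1mx scalerA mulfV // scale1r => bv0.
by have := r_kernelD bv0 (r_kernelN v0); rewrite eventN eventD addrAC subrr add0r subrr.
Qed.

Lemma spatial_total : (exists2 v, v != 0 & r 0 v) -> forall z, spatial z.
Proof.
move=> [v v_neq0 v0].
have [tv0|tv_neq0] := eqVneq (time v) 0; last exact: spatial_of_timelike v0.
rewrite [v]eventE tv0 event_eq0 eqxx andbT in v_neq0 v0.
have [s s_neq0 s0] := spatial_nonzero_axis v_neq0 v0.
exact/spatial_total_of_axis/(spatial_axis_total s_neq0 s0).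
Qed.

Section Temporal.
Let temporal t := r 0 (event 0 t).

Lemma temporalD t t' : temporal t -> temporal t' -> temporal (t + t').
Proof. by move=> rt rt'; have := r_kernelD rt rt'; rewrite eventD addr0. Qed.

Lemma temporalN t : temporal t -> temporal (- t).
Proof. by move=> rt; have := r_kernelN rt; rewrite eventN oppr0. Qed.

Lemma temporal_total_of_conf_galilei t0 :
  invariant_under (@conf_galilei R) r -> t0 != 0 -> temporal t0 ->
  forall t, temporal t.
Proof.
move=> conf t0_neq0 rt0 t.
have scale l : 0 < l -> temporal (l * t0).
  by move=> l_gt0; have := conf _ (conf_galilei_scale l_gt0) _ _ rt0; rewrite scaler0 eventZ scaler0.
rewrite -(divfK t0_neq0 t); case: (ltrgtP (t / t0) 0) => [l_lt0 | l_gt0 | ->].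
- by rewrite -[t / t0]opprK mulNr; apply/temporalN/scale; rewrite oppr_gt0.
- exact: scale.
- by rewrite mul0r /temporal event0; exact: r_refl.
Qed.

Hypothesis all_spatial : forall z, spatial z.

Lemma temporal_time v : r 0 v -> temporal (time v).
Proof.
move=> v0; have := r_kernelD v0 (r_kernelN (all_spatial (space v))).
by rewrite eventN {1}[v]eventE eventD subrr oppr0 addr0.
Qed.

Lemma r_total_of_temporal : (forall t, temporal t) -> forall x y, r x y.
Proof.
move=> all_temporal x y; apply/r_kernelE; rewrite [y - x]eventE.
by have := r_kernelD (all_spatial (space (y - x))) (all_temporal (time (y - x)));
  rewrite eventD addr0 add0r.
Qed.

(* The time projection of the (connected) class of 0 is an interval
   containing 0 and t0. *)
Lemma temporal_total_of_connected t0 :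
  connected_classes r -> t0 != 0 -> temporal t0 -> forall t, temporal t.
Proof.
move=> conn t0_neq0 rt0.
have interval : is_interval (@time R @` [set v | r 0 v]).
  apply/connected_intervalP/connected_continuous_connected; first exact: conn.
  by apply: continuous_subspaceT => v; exact: coord_continuous.
have between t : 0 <= t <= `|t0| -> temporal t.
  move=> t_between; have [v v0 <-] : (@time R @` [set v | r 0 v]) t.
    apply: (interval 0 `|t0|) => //; first by exists 0; rewrite /time ?mxE.
    exists (event 0 `|t0|); last exact: time_event.
    by have [/ger0_norm-> //|/ltr0_norm->] := lerP 0 t0; exact: temporalN.
  exact: temporal_time.
apply: (addr_closed_ball_total (e := `|t0|)); [by rewrite normr_gt0 | exact: temporalD |].
move=> u u_le; have [u_ge0|u_lt0] := lerP 0 u.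
  by apply: between; rewrite u_ge0 -(ger0_norm u_ge0).
by rewrite -[u]opprK; apply/temporalN/between; rewrite oppr_ge0 ltW //= -ltr0_norm.
Qed.

End Temporal.

Lemma invariant_rel_newton_simul : ~ trivial_rel r ->
  (connected_classes r \/ invariant_under (@conf_galilei R) r) ->
  forall x y, r x y <-> newton_simul x y.
Proof.
move=> r_nontriv conn_or_conf.
have all_spatial := spatial_total (kernel_nonzero r_nontriv).
have timeless v : r 0 v -> time v = 0.
  move=> v0; have [//|t_neq0] := eqVneq (time v) 0.
  exfalso; apply: r_nontriv; left.
  have time_v0 := temporal_time all_spatial v0.
  apply: (r_total_of_temporal all_spatial).
  case: conn_or_conf => [conn | conf].
  - exact: (temporal_total_of_connected all_spatial conn t_neq0 time_v0).
  - exact: (temporal_total_of_conf_galilei conf t_neq0 time_v0).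
move=> x y; rewrite r_kernelE; split.
  by move/timeless; rewrite /time !mxE => /eqP; rewrite subr_eq0 => /eqP.
rewrite /newton_simul => xy; rewrite [y - x]eventE.
have -> : time (y - x) = 0 by rewrite /time !mxE xy subrr.
exact: all_spatial.
Qed.

End InvariantRelation.

Theorem proposition3p7 (R : realType) :
  (is_equivalence (@newton_simul R) /\
   invariant_under (@galilei R) (@newton_simul R) /\
   ~ trivial_rel (@newton_simul R) /\
   connected_classes (@newton_simul R) /\
   invariant_under (@conf_galilei R) (@newton_simul R)) /\
  (forall r : 'cV[R]_4 -> 'cV[R]_4 -> Prop,
     is_equivalence r ->
     invariant_under (@galilei R) r ->
     ~ trivial_rel r ->
     (connected_classes r \/ invariant_under (@conf_galilei R) r) ->
     forall x y, r x y <-> newton_simul x y).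
Proof.
split; last exact: invariant_rel_newton_simul.
split; first exact: newton_simul_equivalence.
split; first exact: newton_simul_galilei.
split; first exact: newton_simul_nontrivial.
split; [exact: newton_simul_connected | exact: newton_simul_conf_galilei].
Qed.
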